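(* Let $z_1 = 0$, $z_2=1/3$, $z_3 = -1/3$. For every $\varepsilon > 0$ there exist $T>0$ and $h \in \mathcal{H}$ such that \[ \begin{aligned} z_1-\varepsilon \leq \gamma^{z_3}_h(T)&< \gamma^{z_2}_h(T) \leq z_1+\varepsilon, \\ z_2-\varepsilon \leq \gamma^{z_1}_h(3T)&< \gamma^{z_3}_h(3T)+1 \leq z_2+\varepsilon, \\ z_3-\varepsilon \leq \gamma^{z_2}_h(5T)-1&< \gamma^{z_1}_h(5T) \leq z_3+\varepsilon. \end{aligned} \]
   Context: $\mathcal H$ is the space of piecewise constant compactly supported functions $h=(h_1,h_{-1}):\mathbb{R}^+\to\mathbb{R}^2$. For fixed $\sigma>0$ and $x\in\mathbb{R}$, $\gamma^x_h$ is the real-valued solution of $\frac{\mathrm{d}\gamma^x_h}{\mathrm{d}t}=c+\sigma^2\big(\mathfrak a(\gamma^x_h)-\tfrac12\sum_{k\in\mathbb{Z}}\mathfrak b_k'(\gamma^x_h)\mathfrak b_k(\gamma^x_h)\big)+\sigma\big(\mathfrak b_1(\gamma^x_h)h_1+\mathfrak b_{-1}(\gamma^x_h)h_{-1}\big)$, $\gamma^x_h(0)=x$. Here, for a traveling pulse $u^*$ (speed $c$) of $\mathrm{d}u=Au\,\mathrm{d}t+f(u)\,\mathrm{d}t$ on $\mathcal X=H^{s,p}(\mathbb{R};\mathbb{R}^n)$, with $\mathcal T_xf=f(\cdot-x)$, isochron map $\pi_{\mathrm{iso}}$ (upright $\pi$ in the paper, not the circle constant; defined by $\lim_{t\to\infty}\|u^v(t)-u^*(\cdot-ct-\pi_{\mathrm{iso}}(v))\|_{\mathcal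 X}=0$), basis $e_k(x)=\sqrt2\cos(2\pi kx)$ ($k>0$), $e_0=1$, $e_k(x)=\sqrt2\sin(2\pi kx)$ ($k<0$), coefficients $\alpha_k$, nonlinearity $g$: $\mathfrak a(x)=\tfrac12\sum_k\alpha_k^2\big(\pi_{\mathrm{iso}}'(\mathcal T_xu^* )[g'(\mathcal T_xu^* )g(\mathcal T_xu^* )e_k^2]+\pi_{\mathrm{iso}}''(\mathcal T_xu^* )[g(\mathcal T_xu^* )e_k,g(\mathcal T_xu^* )e_k]\big)$, $\mathfrak b_k(x)=\alpha_k\pi_{\mathrm{iso}}'(\mathcal T_xu^* )[g(\mathcal T_xu^* )e_k]$; these are smooth, 1-periodic, and $\mathrm{span}\{\mathfrak b_1,\mathfrak b_{-1}\}=\{L\sin(2\pi\cdot+\eta):L,\eta\in\mathbb{R}\}$. (The same statement holds for the drift-free control ODE $\frac{\mathrm{d}\tilde\gamma^x_h}{\mathrm{d}t}=\sigma(\mathfrak b_1(\tilde\gamma^x_h)h_1+\mathfrak b_{-1}(\tilde\gamma^x_h)h_{-1})$, and the present lemma transfers it perturbatively.) *)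

From Stdlib Require Import Reals Lra ZArith.
From Coquelicot Require Import Coquelicot.
Open Scope R_scope.

Definition smooth (f : R -> R) : Prop := forall (n : nat) (x : R), ex_derive_n f n x.

Definition periodic1 (f : R -> R) : Prop := forall x : R, f (x + 1) = f x.

Definition summable_Z (u : Z -> R) : Prop :=
  ex_series (fun n : nat => Rabs (u (Z.of_nat n))) /\
  ex_series (fun n : nat => Rabs (u (- (Z.of_nat n + 1))%Z)).

Definition sum_Z (u : Z -> R) : R :=
  Series (fun n : nat => u (Z.of_nat n)) + Series (fun n : nat => u (- (Z.of_nat n + 1))%Z).

Definition corr (b : Z -> R -> R) (x : R) : R :=
  sum_Z (fun k => Derive (b k) x * b k x).

Definition in_H (h : R -> R * R) : Prop :=
  exists (n : nat) (t : nat -> R) (v : nat -> R * R),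
    t 0%nat = 0 /\
    (forall i : nat, (i < n)%nat -> t i < t (S i)) /\
    (forall s : R, 0 <= s ->
       (forall i : nat, (i < n)%nat -> t i <= s < t (S i) -> h s = v i) /\
       (t n <= s -> h s = (0, 0))).

Definition drift (c sigma : R) (a : R -> R) (b : Z -> R -> R) (h : R -> R * R)
  (s y : R) : R :=
  c + sigma ^ 2 * (a y - / 2 * corr b y)
    + sigma * (b 1%Z y * fst (h s) + b (-1)%Z y * snd (h s)).

(* gamma solves d gamma/dt = drift(t, gamma), gamma(0) = x, for t >= 0
   (Caratheodory / integral form, as h is only piecewise constant). *)
Definition is_sol (c sigma : R) (a : R -> R) (b : Z -> R -> R) (h : R -> R * R)
  (x : R) (gamma : R -> R) : Prop :=
  gamma 0 = x /\
  forall t : R, 0 <= t ->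
    is_RInt (fun s => drift c sigma a b h s (gamma s)) 0 t (gamma t - x).

(* With the control constant on a unit time interval, the span hypothesis turns the drift into
   [F0 y + A sin (2 pi (y - m))] for any [A] and [m], where [F0] is the bounded uncontrolled
   part. For large [A] this field carries every point of [(m, m + 1/2)] to within [del] of
   [m + 1/2] and every point of [(m - 1/2, m)] to within [del] of [m - 1/2] in unit time
   (barrier arguments for an autonomous scalar ODE). One such phase gathers [-1/3, 0, 1/3]
   near [0]. Each later stage of two phases takes two points near [c], centres the first sine
   field between them and sends them to [c + 1/3] and [c - 2/3]. The flow preserves order and
   commutes with the shift by 1, so the third point stays between the other two; this gives
   the three configurations at times 1, 3 and 5. *)

From Stdlib Require Import Reals ZArith Lra Lia.
From Coquelicot Require Import Coquelicot.
From Stdlib Require List.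
Import List.ListNotations.
Open Scope list_scope.
Open Scope R_scope.

(** * Lipschitz functions and integral estimates *)

Definition lipschitz (f : R -> R) (K : R) : Prop :=
  forall x y, Rabs (f x - f y) <= K * Rabs (x - y).

Lemma lipschitz_nonneg f K : lipschitz f K -> 0 <= K.
Proof.
  intros Hf. specialize (Hf 1 0). rewrite Rminus_0_r, Rabs_R1 in Hf.
  pose proof (Rabs_pos (f 1 - f 0)). lra.
Qed.

Lemma lipschitz_continuity f K : lipschitz f K -> continuity f.
Proof.
  intros Hf x eps Heps. pose proof (lipschitz_nonneg f K Hf).
  exists (eps / (K + 1)). split; [apply Rdiv_lt_0_compat; lra|].
  intros y [_ Hy]. simpl in *. unfold R_dist in *.
  apply Rle_lt_trans with ((K + 1) * Rabs (y - x)).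
  - specialize (Hf y x). pose proof (Rabs_pos (y - x)). nra.
  - apply Rmult_lt_compat_l with (r := K + 1) in Hy; [|lra].
    replace ((K + 1) * (eps / (K + 1))) with eps in Hy by (field; lra). lra.
Qed.

Lemma Rmax0_lipschitz : lipschitz (Rmax 0) 1.
Proof. intros x y. unfold Rmax; repeat destruct Rle_dec; split_Rabs; lra. Qed.

Lemma pow2_neq0 n : 2 ^ n <> 0.
Proof. apply pow_nonzero. lra. Qed.

Lemma is_lim_seq_div_pow2 C : is_lim_seq (fun n => C / 2 ^ n) 0.
Proof.
  apply (is_lim_seq_ext (fun n => C * (/ 2) ^ n)).
  - intros n. unfold Rdiv. rewrite pow_inv. reflexivity.
  - replace (Finite 0) with (Rbar_mult C 0) by (simpl; f_equal; ring).
    apply is_lim_seq_scal_l, is_lim_seq_geom. rewrite Rabs_pos_eq; lra.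
Qed.

Lemma le_0_of_le_div_pow2 x C : (forall n, x <= C / 2 ^ n) -> x <= 0.
Proof.
  intros H. exact (is_lim_seq_le _ _ x 0 H (is_lim_seq_const x) (is_lim_seq_div_pow2 C)).
Qed.

Lemma div_pow2_lt C eps : 0 < eps -> exists N, C / 2 ^ N < eps.
Proof.
  intros Heps. destruct (proj2 (is_lim_seq_spec _ _) (is_lim_seq_div_pow2 C) (mkposreal eps Heps))
    as [N HN].
  exists N. specialize (HN N (Nat.le_refl N)). simpl in HN.
  rewrite Rminus_0_r in HN. eapply Rle_lt_trans; [apply Rle_abs|exact HN].
Qed.

Lemma is_RInt_Chasles_sub (f : R -> R) a b c Ib Ic :
  is_RInt f a b Ib -> is_RInt f a c Ic -> is_RInt f b c (Ic - Ib).
Proof.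
  intros Hb Hc. replace (Ic - Ib) with (plus (opp Ib) Ic) by (cbn; ring).
  exact (is_RInt_Chasles _ _ _ _ _ _ (is_RInt_swap _ _ _ _ Hb) Hc).
Qed.

Lemma is_RInt_ge_const f a b I m : a <= b -> is_RInt f a b I ->
  (forall x, a <= x <= b -> m <= f x) -> m * (b - a) <= I.
Proof.
  intros Hab HI Hf.
  assert (Hm : is_RInt (fun _ => m) a b (m * (b - a))).
  { replace (m * (b - a)) with (scal (b - a) m) by (cbn; unfold mult; cbn; ring).
    exact (@is_RInt_const R_NormedModule a b m). }
  apply (is_RInt_le _ _ a b _ _ Hab Hm HI). intros; apply Hf; lra.
Qed.

Lemma is_RInt_exp_weight w t I K C : 0 < K -> 0 <= t -> is_RInt w 0 t I ->
  (forall s, 0 <= s <= t -> Rabs (w s) <= K * C * exp (2 * K * s)) ->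
  Rabs I <= C / 2 * exp (2 * K * t).
Proof.
  intros HK Ht HI Hw.
  assert (HC : 0 <= C).
  { specialize (Hw 0 (conj (Rle_refl 0) Ht)). rewrite Rmult_0_r, exp_0 in Hw.
    pose proof (Rabs_pos (w 0)). nra. }
  assert (Hexp : is_RInt (fun s => K * C * exp (2 * K * s)) 0 t
                   (C / 2 * exp (2 * K * t) - C / 2 * exp (2 * K * 0))).
  { apply (is_RInt_derive (fun s => C / 2 * exp (2 * K * s))).
    - intros x _. auto_derive; [easy|]. field.
    - intros x _. apply (@ex_derive_continuous R_AbsRing R_NormedModule). auto_derive. easy. }
  pose proof (norm_RInt_le w _ 0 t I _ Ht Hw HI Hexp) as Hle.
  rewrite Rmult_0_r, exp_0 in Hle. change (Rabs I <= C / 2 * exp (2 * K * t) - C / 2 * 1) in Hle.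
  lra.
Qed.

Lemma is_RInt_abs_le_const (f : R -> R) a b I M : a <= b ->
  (forall x, a <= x <= b -> Rabs (f x) <= M) -> is_RInt f a b I -> Rabs I <= (b - a) * M.
Proof. exact (@norm_RInt_le_const R_NormedModule f a b I M). Qed.

(** * Scalar ODEs in integral form *)

Definition integral_sol_on (D : R -> R -> R) (tau x : R) (g : R -> R) : Prop :=
  forall t, 0 <= t <= tau -> is_RInt (fun s => D s (g s)) 0 t (g t - x).

(* [is_sol c sigma a b h x g] is [g 0 = x /\ integral_sol (drift c sigma a b h) x g]. *)
Definition integral_sol (D : R -> R -> R) (x : R) (g : R -> R) : Prop :=
  forall t, 0 <= t -> is_RInt (fun s => D s (g s)) 0 t (g t - x).

Lemma integral_sol_restrict D tau x g : integral_sol D x g -> integral_sol_on D tau x g.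
Proof. intros Hg t Ht. apply Hg; lra. Qed.

Lemma integral_sol_on_init D tau x g : 0 <= tau -> integral_sol_on D tau x g -> g 0 = x.
Proof.
  intros Htau Hg. specialize (Hg 0 (conj (Rle_refl 0) Htau)).
  apply (is_RInt_unique (V := R_CompleteNormedModule)) in Hg.
  rewrite RInt_point in Hg. change (0 = g 0 - x) in Hg. lra.
Qed.

Lemma integral_ineq_eq0 (w e : R -> R) K C tau : 0 < K ->
  (forall t, 0 <= t <= tau -> is_RInt w 0 t (e t)) ->
  (forall s, 0 <= s <= tau -> Rabs (w s) <= K * Rabs (e s)) ->
  (forall t, 0 <= t <= tau -> Rabs (e t) <= C) ->
  forall t, 0 <= t <= tau -> e t = 0.
Proof.
  intros HK He Hw HC t Ht.
  assert (C0 : 0 <= C) by (pose proof (Rabs_pos (e t)); specialize (HC t Ht); lra).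
  (* Bielecki's trick: each pass through the integral halves the weighted bound. *)
  assert (Hn : forall n s, 0 <= s <= tau -> Rabs (e s) <= C / 2 ^ n * exp (2 * K * s)).
  { induction n as [|n IH]; intros s Hs.
    - assert (1 <= exp (2 * K * s)) by (pose proof (exp_ineq1_le (2 * K * s)); nra).
      specialize (HC s Hs). replace (C / 2 ^ 0) with C by (simpl; field). nra.
    - replace (C / 2 ^ S n) with (C / 2 ^ n / 2) by (simpl; field; apply pow2_neq0).
      apply (is_RInt_exp_weight w s); [lra|lra|apply He; lra|].
      intros r Hr. rewrite Rmult_assoc. eapply Rle_trans; [apply Hw; lra|].
      apply Rmult_le_compat_l; [lra|apply IH; lra]. }
  apply Rabs_eq_0, Rle_antisym; [|apply Rabs_pos].
  apply (le_0_of_le_div_pow2 _ (C * exp (2 * K * t))). intros n.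
  specialize (Hn n t Ht). unfold Rdiv in *. lra.
Qed.

Lemma integral_sol_on_unique D K M tau x u v : 0 < K ->
  (forall s, lipschitz (D s) K) -> (forall s y, Rabs (D s y) <= M) ->
  integral_sol_on D tau x u -> integral_sol_on D tau x v ->
  forall t, 0 <= t <= tau -> u t = v t.
Proof.
  intros HK HL HB Hu Hv t Ht.
  assert (Hdiff : forall r, 0 <= r <= tau ->
    is_RInt (fun s => D s (u s) - D s (v s)) 0 r (u r - v r)).
  { intros r Hr. replace (u r - v r) with ((u r - x) - (v r - x)) by ring.
    exact (is_RInt_minus _ _ _ _ _ _ (Hu r Hr) (Hv r Hr)). }
  enough (u t - v t = 0) by lra.
  apply (integral_ineq_eq0 _ (fun s => u s - v s) K (tau * (2 * M)) tau HK Hdiff);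
    [intros; apply HL| |exact Ht].
  intros r Hr. apply Rle_trans with ((r - 0) * (2 * M)).
  - apply (is_RInt_abs_le_const (fun s => D s (u s) - D s (v s)) 0 r _ _ (proj1 Hr));
      [|exact (Hdiff r Hr)].
    intros s _. cbv beta. pose proof (HB s (u s)). pose proof (HB s (v s)).
    split_Rabs; lra.
  - pose proof (Rabs_pos (D 0 0)). pose proof (HB 0 0). nra.
Qed.

Lemma integral_sol_on_reverse D tau x g : integral_sol_on D tau x g ->
  integral_sol_on (fun s y => - D (tau - s) y) tau (g tau) (fun s => g (tau - s)).
Proof.
  intros Hg t Ht. cbv beta.
  assert (H : is_RInt (fun s => D s (g s)) (-1 * 0 + tau) (-1 * t + tau) (g (tau - t) - g tau)).
  { replace (-1 * 0 + tau) with tau by ring. replace (-1 * t + tau) with (tau - t) by ring.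
    replace (g (tau - t) - g tau) with (opp ((g tau - x) - (g (tau - t) - x)))
      by (cbn; ring).
    apply (@is_RInt_swap R_NormedModule), (is_RInt_Chasles_sub _ 0); apply Hg; lra. }
  apply (is_RInt_ext (fun y => scal (-1) (D (-1 * y + tau) (g (-1 * y + tau))))).
  - intros y _. replace (-1 * y + tau) with (tau - y) by ring. cbn. unfold mult; cbn. ring.
  - exact (is_RInt_comp_lin _ (-1) tau 0 t _ H).
Qed.

Lemma integral_sol_on_backward_unique D K M tau xu xv u v : 0 < K ->
  (forall s, lipschitz (D s) K) -> (forall s y, Rabs (D s y) <= M) -> 0 <= tau ->
  integral_sol_on D tau xu u -> integral_sol_on D tau xv v -> u tau = v tau -> xu = xv.
Proof.
  intros HK HL HB Htau Hu Hv Heq.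
  rewrite <- (integral_sol_on_init _ _ _ _ Htau Hu), <- (integral_sol_on_init _ _ _ _ Htau Hv).
  pose proof (integral_sol_on_reverse _ _ _ _ Hu) as Hu'.
  pose proof (integral_sol_on_reverse _ _ _ _ Hv) as Hv'. rewrite <- Heq in Hv'.
  set (Drev := fun s y => - D (tau - s) y) in Hu', Hv'.
  assert (HLrev : forall s, lipschitz (Drev s) K).
  { intros s y z. unfold Drev. rewrite <- Rabs_Ropp.
    replace (- (- D (tau - s) y - - D (tau - s) z)) with (D (tau - s) y - D (tau - s) z)
      by ring. apply HL. }
  assert (HBrev : forall s y, Rabs (Drev s y) <= M)
    by (intros; unfold Drev; rewrite Rabs_Ropp; apply HB).
  assert (H := integral_sol_on_unique Drev K M _ _ _ _ HK HLrev HBrev Hu' Hv' tau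
                 (conj Htau (Rle_refl tau))).
  cbv beta in H. rewrite Rminus_diag in H. exact H.
Qed.

Section LipschitzODE.

Variables (D : R -> R -> R) (K M : R).
Hypothesis HK : 0 < K.
Hypothesis HL : forall s, lipschitz (D s) K.
Hypothesis HB : forall s y, Rabs (D s y) <= M.

Lemma field_bound_nonneg : 0 <= M.
Proof. pose proof (Rabs_pos (D 0 0)). pose proof (HB 0 0). lra. Qed.

Lemma integral_sol_lipschitz x g : integral_sol D x g ->
  forall t t', 0 <= t -> 0 <= t' -> Rabs (g t - g t') <= M * Rabs (t - t').
Proof.
  intros Hg.
  assert (W : forall t t', 0 <= t' <= t -> Rabs (g t - g t') <= M * Rabs (t - t')).
  { intros t t' Ht. rewrite (Rabs_pos_eq (t - t')), Rmult_comm by lra.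
    replace (g t - g t') with ((g t - x) - (g t' - x)) by ring.
    apply (is_RInt_abs_le_const _ t' t _ M (proj2 Ht) (fun s _ => HB s (g s))).
    apply (is_RInt_Chasles_sub _ 0); apply Hg; lra. }
  intros t t' Ht Ht'. destruct (Rle_dec t' t); [apply W; lra|].
  rewrite Rabs_minus_sym, (Rabs_minus_sym t). apply W; lra.
Qed.

(* Comparison principle: two solutions that met at some time would, by backward uniqueness,
   have started at the same point. *)
Lemma integral_sol_lt xu xv u v : integral_sol D xu u -> integral_sol D xv v -> xu < xv ->
  forall t, 0 <= t -> u t < v t.
Proof.
  intros Hu Hv Hlt t1 Ht1. destruct (Rlt_le_dec (u t1) (v t1)) as [|Hge]; [assumption|exfalso].
  set (e := fun s => v (Rmax 0 s) - u (Rmax 0 s)).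
  assert (He : continuity e).
  { apply (lipschitz_continuity _ (2 * M)). intros s s'. unfold e.
    pose proof (Rmax0_lipschitz s s'). pose proof field_bound_nonneg.
    pose proof (integral_sol_lipschitz _ _ Hu (Rmax 0 s) (Rmax 0 s') (Rmax_l 0 s) (Rmax_l 0 s')).
    pose proof (integral_sol_lipschitz _ _ Hv (Rmax 0 s) (Rmax 0 s') (Rmax_l 0 s) (Rmax_l 0 s')).
    replace (v (Rmax 0 s) - u (Rmax 0 s) - (v (Rmax 0 s') - u (Rmax 0 s')))
      with ((v (Rmax 0 s) - v (Rmax 0 s')) - (u (Rmax 0 s) - u (Rmax 0 s'))) by ring.
    eapply Rle_trans; [apply Rabs_triang|]. rewrite Rabs_Ropp.
    pose proof (Rabs_pos (Rmax 0 s - Rmax 0 s')). nra. }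
  assert (He0 : e 0 = xv - xu).
  { unfold e. rewrite Rmax_left by lra.
    rewrite (integral_sol_on_init _ 0 _ _ (Rle_refl 0) (integral_sol_restrict _ _ _ _ Hu)).
    rewrite (integral_sol_on_init _ 0 _ _ (Rle_refl 0) (integral_sol_restrict _ _ _ _ Hv)).
    reflexivity. }
  assert (He1 : e t1 <= 0) by (unfold e; rewrite Rmax_right by lra; lra).
  destruct (IVT_cor e 0 t1 He Ht1 ltac:(rewrite He0; nra)) as [z [Hz Hez]].
  unfold e in Hez. rewrite Rmax_right in Hez by lra.
  enough (xu = xv) by lra.
  apply (integral_sol_on_backward_unique D K M z xu xv u v HK HL HB (proj1 Hz));
    [apply integral_sol_restrict; assumption..|lra].
Qed.

Hypothesis Hintegrable :
  forall y, continuity y -> forall t, 0 <= t -> ex_RInt (fun s => D s (y s)) 0 t.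

(* Integrating up to [Rmax 0 t] keeps the iterates continuous on all of [R], as required by
   [Hintegrable]. *)
Fixpoint picard (x : R) (n : nat) : R -> R :=
  match n with
  | O => fun _ => x
  | S n => fun t => x + RInt (fun s => D s (picard x n s)) 0 (Rmax 0 t)
  end.

Lemma RInt_field_lipschitz y : continuity y ->
  lipschitz (fun t => RInt (fun s => D s (y s)) 0 (Rmax 0 t)) M.
Proof.
  intros Hy.
  assert (W : forall r r', 0 <= r' <= r ->
    Rabs (RInt (fun s => D s (y s)) 0 r - RInt (fun s => D s (y s)) 0 r') <= M * (r - r')).
  { intros r r' Hr. rewrite Rmult_comm.
    apply (is_RInt_abs_le_const _ r' r _ M (proj2 Hr) (fun s _ => HB s (y s))).
    apply (is_RInt_Chasles_sub _ 0);
      apply (RInt_correct (V := R_CompleteNormedModule)), Hintegrable;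
      auto; lra. }
  intros t t'. pose proof (Rmax0_lipschitz t t'). pose proof field_bound_nonneg.
  pose proof (Rmax_l 0 t). pose proof (Rmax_l 0 t'). cbv beta.
  destruct (Rle_dec (Rmax 0 t') (Rmax 0 t)).
  - eapply Rle_trans; [apply W; lra|]. rewrite Rabs_pos_eq in * by lra. nra.
  - rewrite Rabs_minus_sym. eapply Rle_trans; [apply W; lra|].
    rewrite (Rabs_left1 (Rmax 0 t - Rmax 0 t')) in * by lra. nra.
Qed.

Lemma picard_lipschitz x n : lipschitz (picard x n) M.
Proof.
  induction n as [|n IH]; intros t t'; simpl.
  - rewrite Rminus_diag, Rabs_R0. pose proof field_bound_nonneg.
    pose proof (Rabs_pos (t - t')). nra.
  - replace (x + RInt (fun s => D s (picard x n s)) 0 (Rmax 0 t)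
             - (x + RInt (fun s => D s (picard x n s)) 0 (Rmax 0 t')))
      with (RInt (fun s => D s (picard x n s)) 0 (Rmax 0 t)
            - RInt (fun s => D s (picard x n s)) 0 (Rmax 0 t')) by ring.
    exact (RInt_field_lipschitz _ (lipschitz_continuity _ _ IH) t t').
Qed.

Lemma picard_succ_sol x n t : 0 <= t ->
  is_RInt (fun s => D s (picard x n s)) 0 t (picard x (S n) t - x).
Proof.
  intros Ht. simpl. rewrite Rmax_right, Rplus_minus_l by lra.
  apply (RInt_correct (V := R_CompleteNormedModule)), Hintegrable; [|exact Ht].
  exact (lipschitz_continuity _ _ (picard_lipschitz x n)).
Qed.

Lemma picard_succ_dist x n t : 0 <= t ->
  Rabs (picard x (S n) t - picard x n t) <= M / K / 2 ^ n * exp (2 * K * t).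
Proof.
  revert t. induction n as [|n IH]; intros t Ht.
  - pose proof (is_RInt_abs_le_const _ 0 t _ M Ht (fun s _ => HB s x) (picard_succ_sol x 0 t Ht)).
    change (picard x 0 t) with x.
    assert (K * t <= exp (2 * K * t)) by (pose proof (exp_ineq1_le (2 * K * t)); nra).
    assert (M * t <= M / K * exp (2 * K * t)).
    { pose proof field_bound_nonneg.
      replace (M * t) with (M / K * (K * t)) by (field; lra).
      apply Rmult_le_compat_l; [apply Rdiv_le_0_compat|]; lra. }
    replace (M / K / 2 ^ 0) with (M / K) by (simpl; field; lra). lra.
  - replace (M / K / 2 ^ S n) with (M / K / 2 ^ n / 2)
      by (simpl; field; repeat split; try apply pow2_neq0; lra).
    apply (is_RInt_exp_weight (fun s => D s (picard x (S n) s) - D s (picard x n s)) t);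
      [exact HK|exact Ht| |].
    + replace (picard x (S (S n)) t - picard x (S n) t)
        with ((picard x (S (S n)) t - x) - (picard x (S n) t - x)) by ring.
      exact (is_RInt_minus _ _ _ _ _ _ (picard_succ_sol x (S n) t Ht) (picard_succ_sol x n t Ht)).
    + intros s Hs. rewrite Rmult_assoc. eapply Rle_trans; [apply HL|].
      apply Rmult_le_compat_l; [lra|apply IH; lra].
Qed.

Lemma picard_dist x n k t : 0 <= t ->
  Rabs (picard x (k + n) t - picard x n t) <= 2 * (M / K) / 2 ^ n * exp (2 * K * t).
Proof.
  intros Ht. pose proof (exp_pos (2 * K * t)).
  assert (Hpos : forall m, 0 < 2 ^ m) by (intros; apply pow_lt; lra).
  enough (Htel : Rabs (picard x (k + n) t - picard x n t)
                 <= (2 * (M / K) / 2 ^ n - 2 * (M / K) / 2 ^ (k + n)) * exp (2 * K * t)).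
  { eapply Rle_trans; [exact Htel|]. apply Rmult_le_compat_r; [lra|].
    assert (0 <= 2 * (M / K) / 2 ^ (k + n)); [|lra].
    pose proof field_bound_nonneg. pose proof (Hpos (k + n)%nat).
    apply Rdiv_le_0_compat; [apply Rmult_le_pos, Rdiv_le_0_compat|]; lra. }
  induction k as [|k IH].
  - simpl. rewrite Rminus_diag, Rabs_R0. lra.
  - replace (picard x (S k + n) t - picard x n t)
      with ((picard x (S (k + n)) t - picard x (k + n) t) + (picard x (k + n) t - picard x n t))
      by (simpl; ring).
    eapply Rle_trans; [apply Rabs_triang|].
    pose proof (picard_succ_dist x (k + n) t Ht). pose proof (Hpos (k + n)%nat).
    replace (2 ^ (S k + n)) with (2 * 2 ^ (k + n)) by reflexivity.
    replace ((2 * (M / K) / 2 ^ n - 2 * (M / K) / (2 * 2 ^ (k + n))) * exp (2 * K * t))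
      with (M / K / 2 ^ (k + n) * exp (2 * K * t)
            + (2 * (M / K) / 2 ^ n - 2 * (M / K) / 2 ^ (k + n)) * exp (2 * K * t))
      by (field; repeat split; try apply pow2_neq0; lra).
    lra.
Qed.

Definition picard_limit (x t : R) : R := real (Lim_seq (fun n => picard x n t)).

Lemma picard_limit_dist x n t : 0 <= t ->
  Rabs (picard_limit x t - picard x n t) <= 2 * (M / K) / 2 ^ n * exp (2 * K * t).
Proof.
  intros Ht.
  assert (Hlim : is_lim_seq (fun m => picard x m t) (picard_limit x t)).
  { apply Lim_seq_correct', ex_lim_seq_cauchy_corr. intros eps.
    destruct (div_pow2_lt (2 * (2 * (M / K) * exp (2 * K * t))) eps (cond_pos eps)) as [N HN].
    exists N. intros m p Hm Hp.
    pose proof (picard_dist x N (m - N) t Ht) as H1.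
    pose proof (picard_dist x N (p - N) t Ht) as H2.
    replace (m - N + N)%nat with m in H1 by lia. replace (p - N + N)%nat with p in H2 by lia.
    replace (picard x m t - picard x p t)
      with ((picard x m t - picard x N t) - (picard x p t - picard x N t)) by ring.
    eapply Rle_lt_trans; [apply Rabs_triang|]. rewrite Rabs_Ropp.
    replace (2 * (2 * (M / K) * exp (2 * K * t)) / 2 ^ N)
      with (2 * (M / K) / 2 ^ N * exp (2 * K * t) + 2 * (M / K) / 2 ^ N * exp (2 * K * t)) in HN
      by (field; repeat split; try apply pow2_neq0; lra).
    lra. }
  apply (is_lim_seq_incr_n _ n) in Hlim.
  pose proof (is_lim_seq_abs _ _ (is_lim_seq_minus' _ _ _ _ Hlim (is_lim_seq_const (picard x n t))))
    as Habs.
  exact (is_lim_seq_le _ _ _ _ (fun k => picard_dist x n k t Ht) Habs (is_lim_seq_const _)).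
Qed.

Lemma picard_limit_lipschitz x : lipschitz (picard_limit x) M.
Proof.
  assert (W : forall t t', 0 <= t -> 0 <= t' ->
            Rabs (picard_limit x t - picard_limit x t') <= M * Rabs (t - t')).
  { intros t t' Ht Ht'.
    enough (Rabs (picard_limit x t - picard_limit x t') - M * Rabs (t - t') <= 0) by lra.
    apply (le_0_of_le_div_pow2 _ (2 * (M / K) * (exp (2 * K * t) + exp (2 * K * t')))).
    intros n. pose proof (picard_limit_dist x n t Ht). pose proof (picard_limit_dist x n t' Ht').
    pose proof (picard_lipschitz x n t t').
    replace (picard_limit x t - picard_limit x t')
      with ((picard_limit x t - picard x n t) + (picard x n t - picard x n t')
            - (picard_limit x t' - picard x n t')) by ring.
    replace (2 * (M / K) * (exp (2 * K * t) + exp (2 * K * t')) / 2 ^ n)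
      with (2 * (M / K) / 2 ^ n * exp (2 * K * t) + 2 * (M / K) / 2 ^ n * exp (2 * K * t'))
      by (field; repeat split; try apply pow2_neq0; lra).
    split_Rabs; lra. }
  assert (Hmax : forall t, picard_limit x t = picard_limit x (Rmax 0 t)).
  { intros t. unfold picard_limit. f_equal. apply Lim_seq_ext. intros [|n]; simpl; [reflexivity|].
    rewrite (Rmax_right 0 (Rmax 0 t)) by apply Rmax_l. reflexivity. }
  intros t t'. rewrite (Hmax t), (Hmax t').
  eapply Rle_trans; [apply W; apply Rmax_l|].
  apply Rmult_le_compat_l; [exact field_bound_nonneg|].
  pose proof (Rmax0_lipschitz t t'). lra.
Qed.

Lemma picard_limit_sol x : integral_sol D x (picard_limit x).
Proof.
  intros t Ht.
  assert (HI := RInt_correct (V := R_CompleteNormedModule) _ _ _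
                  (Hintegrable _ (lipschitz_continuity _ _ (picard_limit_lipschitz x)) t Ht)).
  replace (picard_limit x t - x) with (RInt (fun s => D s (picard_limit x s)) 0 t); [exact HI|].
  set (J := RInt (fun s => D s (picard_limit x s)) 0 t) in *.
  enough (Rabs (J - (picard_limit x t - x)) <= 0)
    by (pose proof (Rabs_pos (J - (picard_limit x t - x))); split_Rabs; lra).
  apply (le_0_of_le_div_pow2 _ (2 * (M / K) * exp (2 * K * t))). intros n.
  assert (Hstep : Rabs (J - (picard x (S n) t - x)) <= 2 * (M / K) / 2 ^ n / 2 * exp (2 * K * t)).
  { apply (is_RInt_exp_weight (fun s => D s (picard_limit x s) - D s (picard x n s)) t _ K _ HK Ht).
    - exact (is_RInt_minus _ _ _ _ _ _ HI (picard_succ_sol x n t Ht)).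
    - intros s Hs. rewrite Rmult_assoc. eapply Rle_trans; [apply HL|].
      apply Rmult_le_compat_l; [lra|apply picard_limit_dist; lra]. }
  pose proof (picard_limit_dist x (S n) t Ht) as Happrox.
  replace (2 * (M / K) / 2 ^ S n) with (2 * (M / K) / 2 ^ n / 2) in Happrox
    by (simpl; field; repeat split; try apply pow2_neq0; lra).
  replace (2 * (M / K) * exp (2 * K * t) / 2 ^ n)
    with (2 * (M / K) / 2 ^ n / 2 * exp (2 * K * t) + 2 * (M / K) / 2 ^ n / 2 * exp (2 * K * t))
    by (field; repeat split; try apply pow2_neq0; lra).
  split_Rabs; lra.
Qed.

Lemma integral_sol_exists x : exists g, integral_sol D x g.
Proof. exists (picard_limit x). apply picard_limit_sol. Qed.

End LipschitzODE.

(** * Barriers for autonomous equations *)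

Definition autonomous_sol (G g : R -> R) (t0 t1 : R) : Prop :=
  forall a b, t0 <= a -> a <= b -> b <= t1 -> is_RInt (fun s => G (g s)) a b (g b - g a).

Lemma autonomous_sol_opp G g t0 t1 : autonomous_sol G g t0 t1 ->
  autonomous_sol (fun y => - G (- y)) (fun s => - g s) t0 t1.
Proof.
  intros Hg a b Ha Hab Hb.
  apply (is_RInt_ext (fun s => opp (G (g s)))).
  - intros s _. cbn. rewrite Ropp_involutive. reflexivity.
  - replace (- g b - - g a) with (opp (g b - g a)) by (cbn; ring).
    exact (is_RInt_opp _ _ _ _ (Hg a b Ha Hab Hb)).
Qed.

Lemma lipschitz_conj_opp G K : lipschitz G K -> lipschitz (fun y => - G (- y)) K.
Proof.
  intros HG y z. replace (- G (- y) - - G (- z)) with (- (G (- y) - G (- z))) by ring.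
  replace (y - z) with (- (- y - - z)) by ring. rewrite !Rabs_Ropp. apply HG.
Qed.

Lemma bound_conj_opp G MG : (forall y, Rabs (G y) <= MG) -> forall y, Rabs (- G (- y)) <= MG.
Proof. intros HG y. rewrite Rabs_Ropp. apply HG. Qed.

Lemma last_crossing (g : R -> R) L a t p : a <= t ->
  (forall s s', a <= s <= t -> a <= s' <= t -> Rabs (g s - g s') <= L * Rabs (s - s')) ->
  p <= g a -> g t < p ->
  exists s, a <= s < t /\ g s = p /\ forall r, s < r <= t -> g r < p.
Proof.
  intros Hat Hg Hga Hgt.
  set (L' := Rabs L + 1).
  assert (HL' : 0 < L') by (unfold L'; pose proof (Rabs_pos L); lra).
  assert (Hg' : forall s s', a <= s <= t -> a <= s' <= t ->
                 Rabs (g s - g s') <= L' * Rabs (s - s')).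
  { intros s s' Hs Hs'. eapply Rle_trans; [apply Hg; assumption|]. apply Rmult_le_compat_r;
      [apply Rabs_pos|unfold L'; pose proof (Rle_abs L); lra]. }
  set (E := fun r => a <= r <= t /\ p <= g r).
  destruct (completeness E) as [ss [Hub Hlub]].
  { exists t. intros r [Hr _]. lra. }
  { exists a. split; [lra|exact Hga]. }
  assert (Hss : a <= ss <= t).
  { split; [apply Hub; split; [lra|exact Hga]|apply Hlub; intros r [Hr _]; lra]. }
  assert (Hge : p <= g ss).
  { destruct (Rle_lt_dec p (g ss)) as [|Hlt]; [assumption|exfalso].
    set (eta := (p - g ss) / L').
    assert (Heta : 0 < eta) by (apply Rdiv_lt_0_compat; lra).
    enough (ss <= ss - eta / 2) by lra.
    apply Hlub. intros r [Hr Hgr]. destruct (Rle_lt_dec r (ss - eta / 2)) as [|Hr']; [assumption|].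
    exfalso. assert (Hrss : r <= ss) by (apply Hub; split; assumption).
    pose proof (Hg' r ss Hr Hss) as Hclose. rewrite (Rabs_left1 (r - ss)) in Hclose by lra.
    assert (Hsmall : L' * - (r - ss) < L' * eta) by (apply Rmult_lt_compat_l; lra).
    unfold eta in Hsmall.
    replace (L' * ((p - g ss) / L')) with (p - g ss) in Hsmall by (field; lra).
    split_Rabs; lra. }
  assert (Hss_t : ss < t) by (destruct (proj2 Hss) as [|Heq]; [assumption|subst; lra]).
  assert (Hbelow : forall r, ss < r <= t -> g r < p).
  { intros r Hr. destruct (Rlt_le_dec (g r) p) as [|Hle]; [assumption|exfalso].
    assert (r <= ss) by (apply Hub; split; [lra|exact Hle]). lra. }
  exists ss. split; [lra|]. split; [|exact Hbelow].
  destruct (Rle_lt_dec (g ss) p) as [|Hlt]; [lra|exfalso].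
  set (eta := Rmin ((g ss - p) / L') (t - ss) / 2).
  assert (Heta : 0 < eta).
  { assert (0 < (g ss - p) / L') by (apply Rdiv_lt_0_compat; lra).
    unfold eta, Rmin. destruct Rle_dec; lra. }
  assert (Heta1 : L' * eta <= (g ss - p) / 2).
  { assert (eta <= (g ss - p) / L' / 2) by (unfold eta, Rmin; destruct Rle_dec; lra).
    replace ((g ss - p) / 2) with (L' * ((g ss - p) / L' / 2)) by (field; lra).
    apply Rmult_le_compat_l; lra. }
  assert (Heta2 : eta <= (t - ss) / 2) by (unfold eta, Rmin; destruct Rle_dec; lra).
  pose proof (Hbelow (ss + eta) ltac:(lra)).
  pose proof (Hg' (ss + eta) ss ltac:(lra) Hss) as Hclose.
  replace (ss + eta - ss) with eta in Hclose by ring.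
  rewrite (Rabs_pos_eq eta) in Hclose by lra. split_Rabs; lra.
Qed.

Section Barrier.

Variables (G : R -> R) (KG MG : R).
Hypothesis HGlip : lipschitz G KG.
Hypothesis HGbound : forall y, Rabs (G y) <= MG.

Lemma autonomous_sol_lipschitz g t0 t1 : autonomous_sol G g t0 t1 ->
  forall s s', t0 <= s <= t1 -> t0 <= s' <= t1 -> Rabs (g s - g s') <= MG * Rabs (s - s').
Proof.
  intros Hg.
  assert (W : forall s s', t0 <= s' -> s' <= s -> s <= t1 ->
                Rabs (g s - g s') <= MG * Rabs (s - s')).
  { intros s s' Hs1 Hs2 Hs3. rewrite (Rabs_pos_eq (s - s')), Rmult_comm by lra.
    apply (is_RInt_abs_le_const _ s' s _ MG ltac:(lra) (fun r _ => HGbound (g r))).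
    apply Hg; lra. }
  intros s s' Hs Hs'. destruct (Rle_dec s' s); [apply W; lra|].
  rewrite Rabs_minus_sym, (Rabs_minus_sym s). apply W; lra.
Qed.

(* Where [G > 0] the level [p] can only be crossed upwards: at a last downward crossing the
   solution would still be increasing. *)
Lemma barrier_below g t0 t1 p a : autonomous_sol G g t0 t1 -> 0 < G p ->
  t0 <= a <= t1 -> p <= g a -> forall t, a <= t <= t1 -> p <= g t.
Proof.
  intros Hg HGp Ha Hga t Ht. destruct (Rle_lt_dec p (g t)) as [|Hlt]; [assumption|exfalso].
  pose proof (lipschitz_nonneg _ _ HGlip) as HKG.
  assert (HMG : 0 <= MG) by (pose proof (HGbound 0); pose proof (Rabs_pos (G 0)); lra).
  assert (Hglip := autonomous_sol_lipschitz _ _ _ Hg).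
  destruct (last_crossing g MG a t p (proj1 Ht)
              (fun s s' Hs Hs' => Hglip s s' ltac:(lra) ltac:(lra)) Hga Hlt)
    as [s [Hs [Hgs Hbelow]]].
  set (eta := Rmin (t - s) (G p / (2 * (KG * MG + 1)))).
  assert (Heta : 0 < eta).
  { unfold eta, Rmin. destruct Rle_dec; [lra|]. apply Rdiv_lt_0_compat; nra. }
  assert (Heta1 : eta <= t - s) by apply Rmin_l.
  assert (Heta2 : KG * MG * eta <= G p / 2).
  { assert (eta <= G p / (2 * (KG * MG + 1))) by apply Rmin_r.
    apply Rle_trans with ((KG * MG + 1) * eta); [nra|].
    replace (G p / 2) with ((KG * MG + 1) * (G p / (2 * (KG * MG + 1)))) by (field; nra).
    apply Rmult_le_compat_l; nra. }
  assert (Hrise : G p / 2 * (s + eta - s) <= g (s + eta) - g s).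
  { apply (is_RInt_ge_const (fun r => G (g r)) s (s + eta)); [lra|apply Hg; lra|].
    intros r Hr. pose proof (HGlip (g r) p) as H1.
    pose proof (Hglip r s ltac:(lra) ltac:(lra)) as H2.
    rewrite Hgs, (Rabs_pos_eq (r - s)) in H2 by lra.
    assert (KG * Rabs (g r - p) <= KG * MG * eta)
      by (rewrite Rmult_assoc; apply Rmult_le_compat_l; nra).
    split_Rabs; lra. }
  pose proof (Hbelow (s + eta) ltac:(lra)). nra.
Qed.

End Barrier.

Lemma barrier_above G KG MG g t0 t1 q a : lipschitz G KG -> (forall y, Rabs (G y) <= MG) ->
  autonomous_sol G g t0 t1 -> G q < 0 ->
  t0 <= a <= t1 -> g a <= q -> forall t, a <= t <= t1 -> g t <= q.
Proof.
  intros HGlip HGbound Hg HGq Ha Hga t Ht.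
  enough (- q <= - g t) by lra.
  apply (barrier_below (fun y => - G (- y)) KG MG (lipschitz_conj_opp _ _ HGlip)
           (bound_conj_opp _ _ HGbound) (fun s => - g s) t0 t1 (- q) a);
    [apply autonomous_sol_opp; exact Hg|rewrite Ropp_involutive; lra|exact Ha|lra|exact Ht].
Qed.

Lemma capture_above G KG MG g t0 t1 p q1 q2 : lipschitz G KG -> (forall y, Rabs (G y) <= MG) ->
  autonomous_sol G g t0 t1 -> p <= q1 <= q2 -> (forall y, p <= y <= q1 -> 1 <= G y) ->
  G q2 < 0 -> q1 - p <= t1 - t0 -> p <= g t0 <= q2 -> q1 <= g t1 <= q2.
Proof.
  intros HGlip HGbound Hg Hpq HG Hq2 Hlen Hg0.
  assert (Hlo := barrier_below G KG MG HGlip HGbound g t0 t1 p t0 Hg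
                   ltac:(specialize (HG p ltac:(lra)); lra) ltac:(lra) ltac:(lra)).
  assert (Hhi := barrier_above G KG MG g t0 t1 q2 t0 HGlip HGbound Hg Hq2 ltac:(lra) ltac:(lra)).
  split; [|apply Hhi; lra].
  destruct (Rle_lt_dec q1 (g t1)) as [|Hlt]; [assumption|exfalso].
  assert (Hstay : forall s, t0 <= s <= t1 -> g s < q1).
  { intros s Hs. destruct (Rlt_le_dec (g s) q1) as [|Hge]; [assumption|exfalso].
    pose proof (barrier_below G KG MG HGlip HGbound g t0 t1 q1 s Hg
                  ltac:(specialize (HG q1 ltac:(lra)); lra) Hs Hge t1 ltac:(lra)). lra. }
  assert (1 * (t1 - t0) <= g t1 - g t0).
  { apply (is_RInt_ge_const (fun s => G (g s)) t0 t1); [lra|apply Hg; lra|].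
    intros s Hs. apply HG. split; [apply Hlo; lra|left; apply Hstay; lra]. }
  lra.
Qed.


Lemma sin_2PI_pos d : 0 < d <= 1/4 -> 0 < sin (2 * PI * d).
Proof. intros Hd. pose proof PI_RGT_0. apply sin_gt_0; nra. Qed.

Lemma sin_2PI_ge d x : 0 < d -> d <= x <= 1/2 - d -> sin (2 * PI * d) <= sin (2 * PI * x).
Proof.
  intros Hd Hx. pose proof PI_RGT_0.
  destruct (Rle_dec (2 * PI * x) (PI / 2)).
  - apply sin_incr_1; nra.
  - rewrite <- (sin_PI_x (2 * PI * x)). apply sin_incr_1; nra.
Qed.

(* [G >= 1] on [[m + d, m + 1/2 - del]] while [G < 0] at [m + 1/2 + del]. *)
Lemma sine_capture_above G KG g t0 A m d del MF : lipschitz G KG ->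
  (forall y, Rabs (G y - A * sin (2 * PI * (y - m))) <= MF) -> autonomous_sol G g t0 (t0 + 1) ->
  0 < d <= del -> del <= 1/4 -> MF + 1 <= A * sin (2 * PI * d) ->
  d <= g t0 - m <= 1/2 + del -> m + 1/2 - del <= g (t0 + 1) <= m + 1/2 + del.
Proof.
  intros HGlip HGsin Hg Hd Hdel HA Hg0.
  assert (HMF : 0 <= MF)
    by (pose proof (HGsin 0); pose proof (Rabs_pos (G 0 - A * sin (2 * PI * (0 - m)))); lra).
  pose proof (sin_2PI_pos d ltac:(lra)) as Hsd.
  assert (HApos : 0 < A) by nra.
  assert (HGbound : forall y, Rabs (G y) <= MF + A).
  { intros y. specialize (HGsin y). pose proof (SIN_bound (2 * PI * (y - m))) as Hsin.
    assert (Rabs (A * sin (2 * PI * (y - m))) <= A)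
      by (rewrite Rabs_mult, Rabs_pos_eq by lra; apply Rabs_le in Hsin; nra).
    split_Rabs; lra. }
  apply (capture_above G KG (MF + A) g t0 (t0 + 1) (m + d) (m + 1/2 - del) (m + 1/2 + del)
           HGlip HGbound Hg); [lra| | |lra|lra].
  - intros y Hy. specialize (HGsin y).
    pose proof (sin_2PI_ge d (y - m) ltac:(lra) ltac:(lra)). split_Rabs; nra.
  - specialize (HGsin (m + 1/2 + del)).
    replace (2 * PI * (m + 1/2 + del - m)) with (2 * PI * del + PI) in HGsin by field.
    rewrite neg_sin in HGsin.
    pose proof (sin_2PI_ge d del ltac:(lra) ltac:(lra)). split_Rabs; nra.
Qed.

Lemma sine_capture_below G KG g t0 A m d del MF : lipschitz G KG ->
  (forall y, Rabs (G y - A * sin (2 * PI * (y - m))) <= MF) -> autonomous_sol G g t0 (t0 + 1) ->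
  0 < d <= del -> del <= 1/4 -> MF + 1 <= A * sin (2 * PI * d) ->
  - (1/2) - del <= g t0 - m <= - d -> m - 1/2 - del <= g (t0 + 1) <= m - 1/2 + del.
Proof.
  intros HGlip HGsin Hg Hd Hdel HA Hg0.
  enough (- m + 1/2 - del <= - g (t0 + 1) <= - m + 1/2 + del) by lra.
  apply (sine_capture_above (fun y => - G (- y)) KG (fun s => - g s) t0 A (- m) d del MF
           (lipschitz_conj_opp _ _ HGlip)); [|apply autonomous_sol_opp; exact Hg|lra|lra|lra|lra].
  intros y. specialize (HGsin (- y)).
  replace (2 * PI * (y - - m)) with (- (2 * PI * (- y - m))) by ring. rewrite sin_neg.
  replace (- G (- y) - A * - sin (2 * PI * (- y - m)))
    with (- (G (- y) - A * sin (2 * PI * (- y - m)))) by ring.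
  rewrite Rabs_Ropp. exact HGsin.
Qed.

(** * Periodic functions and step controls *)

Lemma periodic1_IZR f : periodic1 f -> forall x n, f (x + IZR n) = f x.
Proof.
  intros Hf x n.
  assert (Hnat : forall x k, f (x + INR k) = f x).
  { intros y k. induction k as [|k IH]; [rewrite Rplus_0_r; reflexivity|].
    rewrite S_INR, <- Rplus_assoc, Hf. exact IH. }
  destruct (Z_le_gt_dec 0 n).
  - rewrite <- (Z2Nat.id n), <- INR_IZR_INZ by lia. apply Hnat.
  - replace n with (- Z.of_nat (Z.to_nat (- n)))%Z by lia.
    rewrite opp_IZR, <- INR_IZR_INZ, <- (Hnat (x + - INR (Z.to_nat (- n))) (Z.to_nat (- n))).
    f_equal. ring.
Qed.

Lemma periodic1_bounded f : continuity f -> periodic1 f -> exists M, forall x, Rabs (f x) <= M.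
Proof.
  intros Hc Hf.
  destruct (continuity_ab_maj (fun x => Rabs (f x)) 0 1 ltac:(lra)) as [x1 [Hx1 _]].
  { intros x _. exact (continuity_pt_comp f Rabs x (Hc x) (Rcontinuity_abs (f x))). }
  exists (Rabs (f x1)). intros x. destruct (archimed x) as [Hup1 Hup2].
  replace (f x) with (f (x + IZR (1 - up x))) by apply periodic1_IZR, Hf.
  apply Hx1. rewrite minus_IZR. lra.
Qed.

Lemma smooth_continuity f : smooth f -> continuity f.
Proof.
  intros Hs x. apply continuity_pt_filterlim.
  apply (@ex_derive_continuous R_AbsRing R_NormedModule). exact (Hs 1%nat x).
Qed.

Lemma periodic1_Derive f : smooth f -> periodic1 f -> periodic1 (Derive f).
Proof.
  intros Hs Hf x.
  assert (H : is_derive (fun y => f (y + 1)) x (scal 1 (Derive f (x + 1)))).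
  { apply (is_derive_comp f (fun y => y + 1) x (Derive f (x + 1)) 1).
    - apply Derive_correct. exact (Hs 1%nat (x + 1)).
    - auto_derive; [easy|ring]. }
  apply (is_derive_ext _ f) in H; [|intros; apply Hf].
  rewrite (is_derive_unique _ _ _ H). cbn. unfold mult; cbn. ring.
Qed.

Lemma smooth_periodic1_lipschitz_bounded f : smooth f -> periodic1 f ->
  exists K M, lipschitz f K /\ forall y, Rabs (f y) <= M.
Proof.
  intros Hs Hf.
  destruct (periodic1_bounded (Derive f)) as [K HK]; [|apply periodic1_Derive; assumption|].
  { intros x. apply continuity_pt_filterlim, (@ex_derive_continuous R_AbsRing R_NormedModule).
    exact (Hs 2%nat x). }
  destruct (periodic1_bounded f (smooth_continuity f Hs) Hf) as [M HM].
  exists K, M. split; [|exact HM]. intros x y.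
  destruct (MVT_gen f y x (Derive f)) as [z [_ Hz]].
  - intros; apply Derive_correct. exact (Hs 1%nat _).
  - intros; apply smooth_continuity; assumption.
  - rewrite Hz, Rabs_mult. apply Rmult_le_compat_r; [apply Rabs_pos|apply HK].
Qed.

Definition bounded_control (h : R -> R * R) (H : R) : Prop :=
  forall s, Rabs (fst (h s)) <= H /\ Rabs (snd (h s)) <= H.

Fixpoint step_control (t0 : R) (vs : list (R * R)) (s : R) : R * R :=
  match vs with
  | nil => (0, 0)
  | v :: vs => if Rlt_dec s (t0 + 1) then v else step_control (t0 + 1) vs s
  end.

Lemma step_control_nth t0 vs i s : t0 + INR i <= s < t0 + INR i + 1 ->
  step_control t0 vs s = List.nth i vs (0, 0).
Proof.
  revert t0 i. induction vs as [|v vs IH]; intros t0 i Hs; [destruct i; reflexivity|].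
  simpl. destruct i as [|i].
  - rewrite Rplus_0_r in Hs. destruct Rlt_dec; [reflexivity|lra].
  - rewrite S_INR in Hs. pose proof (pos_INR i).
    destruct Rlt_dec; [lra|]. apply IH. lra.
Qed.

Lemma step_control_beyond t0 vs s : t0 + INR (length vs) <= s -> step_control t0 vs s = (0, 0).
Proof.
  revert t0. induction vs as [|v vs IH]; intros t0 Hs; [reflexivity|].
  change (length (v :: vs)) with (S (length vs)) in Hs. rewrite S_INR in Hs.
  pose proof (pos_INR (length vs)). simpl.
  destruct Rlt_dec; [lra|]. apply IH. lra.
Qed.

Lemma step_control_app t0 vs ws s : t0 <= s < t0 + INR (length vs) ->
  step_control t0 (vs ++ ws) s = step_control t0 vs s.
Proof.
  revert t0. induction vs as [|v vs IH]; intros t0 Hs.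
  - simpl in Hs. lra.
  - change (length (v :: vs)) with (S (length vs)) in Hs. rewrite S_INR in Hs.
    simpl. destruct Rlt_dec; [reflexivity|]. apply IH. lra.
Qed.

Lemma step_control_bounded vs : exists H, forall t0, bounded_control (step_control t0 vs) H.
Proof.
  induction vs as [|v vs [H IH]].
  - exists 0. intros t0 s. simpl. rewrite Rabs_R0. lra.
  - exists (H + Rabs (fst v) + Rabs (snd v)). intros t0 s.
    pose proof (Rabs_pos (fst v)). pose proof (Rabs_pos (snd v)).
    pose proof (IH 0 0) as [HH _]. pose proof (Rabs_pos (fst (step_control 0 vs 0))).
    simpl. destruct Rlt_dec; [lra|]. specialize (IH (t0 + 1) s). lra.
Qed.

Lemma in_H_step_control vs : in_H (step_control 0 vs).
Proof.
  exists (length vs), INR, (fun i => List.nth i vs (0, 0)).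
  split; [reflexivity|]. split.
  - intros i _. apply lt_INR. lia.
  - intros s _. split.
    + intros i _ Hs. apply step_control_nth. rewrite S_INR in Hs. lra.
    + intros Hs. apply step_control_beyond. lra.
Qed.

(** * The controlled equation *)

Lemma sin_2PI_shift1 x m : sin (2 * PI * (x - m)) = sin (2 * PI * (x - (m - 1))).
Proof.
  replace (2 * PI * (x - (m - 1))) with (2 * PI * (x - m) + PI + PI) by ring.
  rewrite !neg_sin. ring.
Qed.

Lemma sine_amplitude MF d : 0 < d <= 1/4 ->
  MF + 1 <= (MF + 1) / sin (2 * PI * d) * sin (2 * PI * d).
Proof. intros Hd. pose proof (sin_2PI_pos d Hd). right. field. lra. Qed.

(* The shape of [drift]; it yields both a Lipschitz constant and a bound for it. *)
Lemma Rabs_affine_combination_le c0 s2 s1 p q r t u w P Q R T U W : 0 <= s2 -> 0 <= s1 ->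
  Rabs p <= P -> Rabs q <= Q -> Rabs r <= R -> Rabs t <= T -> Rabs u <= U -> Rabs w <= W ->
  Rabs (c0 + s2 * (p - / 2 * q) + s1 * (r * u + t * w))
    <= Rabs c0 + s2 * (P + Q) + s1 * (R * U + T * W).
Proof.
  intros Hs2 Hs1 Hp Hq Hr Ht Hu Hw.
  assert (Hpq : Rabs (p - / 2 * q) <= P + Q)
    by (pose proof (Rabs_pos q); split_Rabs; lra).
  assert (Hrt : Rabs (r * u + t * w) <= R * U + T * W).
  { eapply Rle_trans; [apply Rabs_triang|]. rewrite !Rabs_mult.
    apply Rplus_le_compat; apply Rmult_le_compat; try apply Rabs_pos; assumption. }
  eapply Rle_trans; [apply Rabs_triang|]. eapply Rle_trans; [apply Rplus_le_compat_r, Rabs_triang|].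
  rewrite !Rabs_mult, (Rabs_pos_eq s2), (Rabs_pos_eq s1) by assumption.
  pose proof (Rmult_le_compat_l _ _ _ Hs2 Hpq). pose proof (Rmult_le_compat_l _ _ _ Hs1 Hrt). lra.
Qed.

Section Model.

Variables (c sigma : R) (a : R -> R) (b : Z -> R -> R).
Hypothesis Hsigma : 0 < sigma.
Hypothesis Ha : smooth a.
Hypothesis Hap : periodic1 a.
Hypothesis Hb : forall k : Z, smooth (b k).
Hypothesis Hbp : forall k : Z, periodic1 (b k).
Hypothesis Hcorr : smooth (corr b).
Hypothesis Hspan2 : forall L eta : R, exists l1 l2 : R,
  forall x : R, l1 * b 1%Z x + l2 * b (-1)%Z x = L * sin (2 * PI * x + eta).

Definition drift0 (y : R) : R := c + sigma ^ 2 * (a y - / 2 * corr b y).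

Definition control_field (v : R * R) (y : R) : R :=
  sigma * (b 1%Z y * fst v + b (-1)%Z y * snd v).

Local Notation sol := (is_sol c sigma a b).

Lemma corr_periodic1 : periodic1 (corr b).
Proof.
  intros x. unfold corr, sum_Z. f_equal; apply Series_ext; intros n;
    rewrite (periodic1_Derive _ (Hb _) (Hbp _)), Hbp; reflexivity.
Qed.

Lemma drift_periodic1 h s : periodic1 (drift c sigma a b h s).
Proof. intros y. unfold drift. rewrite Hap, corr_periodic1, !Hbp. reflexivity. Qed.

Lemma drift0_bounded : exists MF, forall y, Rabs (drift0 y) <= MF.
Proof.
  apply periodic1_bounded; [|intros y; unfold drift0; rewrite Hap, corr_periodic1; reflexivity].
  intros y. apply continuity_pt_filterlim, (@ex_derive_continuous R_AbsRing R_NormedModule).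
  unfold drift0. auto_derive. repeat split; [exact (Ha 1%nat y)|exact (Hcorr 1%nat y)].
Qed.

Lemma drift_field_continuity v : continuity (fun y => drift0 y + control_field v y).
Proof.
  intros y. apply continuity_pt_filterlim.
  apply (@ex_derive_continuous R_AbsRing R_NormedModule (fun y => drift0 y + control_field v y)).
  unfold drift0, control_field. auto_derive.
  repeat split; [exact (Ha 1%nat y)|exact (Hcorr 1%nat y)|exact (Hb 1%Z 1%nat y)
                |exact (Hb (-1)%Z 1%nat y)].
Qed.

Lemma drift_lipschitz_bounded h H : bounded_control h H -> exists K M, 0 < K /\
  (forall s, lipschitz (drift c sigma a b h s) K) /\
  (forall s y, Rabs (drift c sigma a b h s y) <= M).
Proof.
  intros Hh.
  destruct (smooth_periodic1_lipschitz_bounded a Ha Hap) as [Ka [Ma [HKa HMa]]].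
  destruct (smooth_periodic1_lipschitz_bounded _ Hcorr corr_periodic1) as [Kc [Mc [HKc HMc]]].
  destruct (smooth_periodic1_lipschitz_bounded _ (Hb 1%Z) (Hbp 1%Z)) as [K1 [M1 [HK1 HM1]]].
  destruct (smooth_periodic1_lipschitz_bounded _ (Hb (-1)%Z) (Hbp (-1)%Z))
    as [K2 [M2 [HK2 HM2]]].
  pose proof (lipschitz_nonneg _ _ HKa). pose proof (lipschitz_nonneg _ _ HKc).
  pose proof (lipschitz_nonneg _ _ HK1). pose proof (lipschitz_nonneg _ _ HK2).
  assert (HH : 0 <= H) by (pose proof (Hh 0) as [Hf _]; pose proof (Rabs_pos (fst (h 0))); lra).
  assert (Hs2 : 0 <= sigma ^ 2) by (apply pow_le; lra).
  exists (sigma ^ 2 * (Ka + Kc) + sigma * (K1 * H + K2 * H) + 1),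
         (Rabs c + sigma ^ 2 * (Ma + Mc) + sigma * (M1 * H + M2 * H)).
  split; [|split].
  - assert (0 <= sigma * (K1 * H + K2 * H)) by (apply Rmult_le_pos; nra). nra.
  - intros s y z. destruct (Hh s) as [Hu Hw].
    replace (drift c sigma a b h s y - drift c sigma a b h s z)
      with (0 + sigma ^ 2 * ((a y - a z) - / 2 * (corr b y - corr b z))
            + sigma * ((b 1%Z y - b 1%Z z) * fst (h s) + (b (-1)%Z y - b (-1)%Z z) * snd (h s)))
      by (unfold drift; ring).
    eapply Rle_trans;
      [apply (Rabs_affine_combination_le _ _ _ _ _ _ _ _ _ _ _ _ _ _ _ Hs2 (Rlt_le _ _ Hsigma)
                (HKa y z) (HKc y z) (HK1 y z) (HK2 y z) Hu Hw)|].
    rewrite Rabs_R0. pose proof (Rabs_pos (y - z)). nra.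
  - intros s y. destruct (Hh s) as [Hu Hw].
    exact (Rabs_affine_combination_le _ _ _ _ _ _ _ _ _ _ _ _ _ _ _ Hs2 (Rlt_le _ _ Hsigma)
             (HMa y) (HMc y) (HM1 y) (HM2 y) Hu Hw).
Qed.

Lemma control_exists A m : exists v, forall y, control_field v y = A * sin (2 * PI * (y - m)).
Proof.
  destruct (Hspan2 A (- (2 * PI * m))) as [l1 [l2 Hl]].
  exists (l1 / sigma, l2 / sigma). intros y. unfold control_field. simpl.
  replace (2 * PI * (y - m)) with (2 * PI * y + - (2 * PI * m)) by ring.
  rewrite <- Hl. field. lra.
Qed.

Lemma is_sol_shift1 h x g : sol h x g -> sol h (x + 1) (fun t => g t + 1).
Proof.
  intros [Hg0 Hg]. split; [rewrite Hg0; reflexivity|]. intros t Ht.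
  replace (g t + 1 - (x + 1)) with (g t - x) by ring.
  apply (is_RInt_ext (fun s => drift c sigma a b h s (g s))); [|exact (Hg t Ht)].
  intros s _. symmetry. apply drift_periodic1.
Qed.

Lemma is_sol_lt h H x x' g g' : bounded_control h H -> sol h x g -> sol h x' g' -> x < x' ->
  forall t, 0 <= t -> g t < g' t.
Proof.
  intros Hh [_ Hg] [_ Hg'] Hx.
  destruct (drift_lipschitz_bounded h H Hh) as [K [M [HK [HL HB]]]].
  exact (integral_sol_lt _ K M HK HL HB _ _ _ _ Hg Hg' Hx).
Qed.

Lemma is_sol_causal h1 h2 H tau x u g : bounded_control h1 H -> 0 <= tau ->
  (forall s, 0 <= s < tau -> h1 s = h2 s) -> sol h1 x u -> sol h2 x g -> u tau = g tau.
Proof.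
  intros Hh Htau Hh12 [_ Hu] [_ Hg].
  destruct (drift_lipschitz_bounded h1 H Hh) as [K [M [HK [HL HB]]]].
  apply (integral_sol_on_unique _ K M tau x u g HK HL HB);
    [exact (integral_sol_restrict _ _ _ _ Hu)| |lra].
  intros t Ht. apply (is_RInt_ext (fun s => drift c sigma a b h2 s (g s))); [|apply Hg; lra].
  intros s Hs. rewrite Rmin_left, Rmax_right in Hs by lra. unfold drift. rewrite Hh12 by lra.
  reflexivity.
Qed.

Lemma is_sol_autonomous h x g t0 v : sol h x g -> 0 <= t0 ->
  (forall s, t0 <= s < t0 + 1 -> h s = v) ->
  autonomous_sol (fun y => drift0 y + control_field v y) g t0 (t0 + 1).
Proof.
  intros [_ Hg] Ht0 Hh p q Hp Hpq Hq.
  replace (g q - g p) with ((g q - x) - (g p - x)) by ring.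
  apply (is_RInt_ext (fun s => drift c sigma a b h s (g s))).
  - intros s Hs. rewrite Rmin_left, Rmax_right in Hs by lra. unfold drift. rewrite Hh by lra.
    reflexivity.
  - apply (is_RInt_Chasles_sub _ 0); apply Hg; lra.
Qed.

Lemma constant_control_sine v A m MF : (forall y, Rabs (drift0 y) <= MF) ->
  (forall y, control_field v y = A * sin (2 * PI * (y - m))) ->
  exists KG, lipschitz (fun y => drift0 y + control_field v y) KG /\
    forall y, Rabs (drift0 y + control_field v y - A * sin (2 * PI * (y - m))) <= MF.
Proof.
  intros HMF Hv.
  destruct (drift_lipschitz_bounded (fun _ => v) (Rabs (fst v) + Rabs (snd v)))
    as [K [_ [_ [HL _]]]].
  { intros s. pose proof (Rabs_pos (fst v)). pose proof (Rabs_pos (snd v)). simpl. lra. }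
  exists K. split; [exact (HL 0)|]. intros y. rewrite Hv.
  replace (drift0 y + A * sin (2 * PI * (y - m)) - A * sin (2 * PI * (y - m))) with (drift0 y)
    by ring.
  apply HMF.
Qed.

Lemma phase_above h x g t0 v A m d del MF : (forall y, Rabs (drift0 y) <= MF) ->
  sol h x g -> 0 <= t0 -> (forall s, t0 <= s < t0 + 1 -> h s = v) ->
  (forall y, control_field v y = A * sin (2 * PI * (y - m))) ->
  0 < d <= del -> del <= 1/4 -> MF + 1 <= A * sin (2 * PI * d) ->
  d <= g t0 - m <= 1/2 + del -> m + 1/2 - del <= g (t0 + 1) <= m + 1/2 + del.
Proof.
  intros HMF Hg Ht0 Hh Hv. destruct (constant_control_sine v A m MF HMF Hv) as [KG [HKG Hclose]].
  exact (sine_capture_above _ KG g t0 A m d del MF HKG Hclose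
           (is_sol_autonomous h x g t0 v Hg Ht0 Hh)).
Qed.

Lemma phase_below h x g t0 v A m d del MF : (forall y, Rabs (drift0 y) <= MF) ->
  sol h x g -> 0 <= t0 -> (forall s, t0 <= s < t0 + 1 -> h s = v) ->
  (forall y, control_field v y = A * sin (2 * PI * (y - m))) ->
  0 < d <= del -> del <= 1/4 -> MF + 1 <= A * sin (2 * PI * d) ->
  - (1/2) - del <= g t0 - m <= - d -> m - 1/2 - del <= g (t0 + 1) <= m - 1/2 + del.
Proof.
  intros HMF Hg Ht0 Hh Hv. destruct (constant_control_sine v A m MF HMF Hv) as [KG [HKG Hclose]].
  exact (sine_capture_below _ KG g t0 A m d del MF HKG Hclose
           (is_sol_autonomous h x g t0 v Hg Ht0 Hh)).
Qed.

Lemma drift_step_integrable vs t0 y : continuity y -> forall p q, p <= q ->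
  ex_RInt (fun s => drift c sigma a b (step_control t0 vs) s (y s)) p q.
Proof.
  revert t0. induction vs as [|v vs IH]; intros t0 Hy p q Hpq.
  - apply (ex_RInt_continuous (V := R_CompleteNormedModule)). intros z _.
    apply continuity_pt_filterlim.
    exact (continuity_pt_comp y _ z (Hy z) (drift_field_continuity (0, 0) (y z))).
  - assert (Hlo : forall p q, p <= q -> q <= t0 + 1 ->
              ex_RInt (fun s => drift c sigma a b (step_control t0 (v :: vs)) s (y s)) p q).
    { intros p' q' Hpq' Hq'.
      apply (ex_RInt_ext (fun s => drift0 (y s) + control_field v (y s))).
      - intros s Hs. rewrite Rmin_left, Rmax_right in Hs by lra. unfold drift. simpl.
        destruct Rlt_dec; [reflexivity|lra].
      - apply (ex_RInt_continuous (V := R_CompleteNormedModule)). intros z _.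
        apply continuity_pt_filterlim.
        exact (continuity_pt_comp y _ z (Hy z) (drift_field_continuity v (y z))). }
    assert (Hhi : forall p q, t0 + 1 <= p -> p <= q ->
              ex_RInt (fun s => drift c sigma a b (step_control t0 (v :: vs)) s (y s)) p q).
    { intros p' q' Hp' Hpq'.
      apply (ex_RInt_ext (fun s => drift c sigma a b (step_control (t0 + 1) vs) s (y s))).
      - intros s Hs. rewrite Rmin_left, Rmax_right in Hs by lra. unfold drift. simpl.
        destruct Rlt_dec; [lra|reflexivity].
      - apply IH; assumption. }
    destruct (Rle_dec q (t0 + 1)); [apply Hlo; assumption|].
    destruct (Rle_dec (t0 + 1) p); [apply Hhi; lra|].
    apply (ex_RInt_Chasles _ _ (t0 + 1)); [apply Hlo|apply Hhi]; lra.
Qed.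

Lemma step_sol_exists vs x : exists g, sol (step_control 0 vs) x g.
Proof.
  destruct (step_control_bounded vs) as [H HH].
  destruct (drift_lipschitz_bounded (step_control 0 vs) H (HH 0)) as [K [M [HK [HL HB]]]].
  destruct (integral_sol_exists _ K M HK HL HB) with (x := x) as [g Hg].
  { intros y Hy t Ht. apply drift_step_integrable; assumption. }
  exists g. split; [|exact Hg].
  exact (integral_sol_on_init _ 0 _ _ (Rle_refl 0) (integral_sol_restrict _ _ _ _ Hg)).
Qed.

Lemma step_sol_prefix vs ws x u g tau : 0 <= tau <= INR (length vs) ->
  sol (step_control 0 vs) x u -> sol (step_control 0 (vs ++ ws)) x g -> u tau = g tau.
Proof.
  intros Htau Hu Hg. destruct (step_control_bounded vs) as [H HH].
  apply (is_sol_causal _ (step_control 0 (vs ++ ws)) H tau x u g (HH 0) (proj1 Htau));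
    [|assumption..].
  intros s Hs. symmetry. apply step_control_app. lra.
Qed.

Lemma step_sols_ordered vs g1 g2 g3 : sol (step_control 0 vs) 0 g1 ->
  sol (step_control 0 vs) (1/3) g2 -> sol (step_control 0 vs) (- (1/3)) g3 ->
  forall t, 0 <= t -> g3 t < g1 t /\ g1 t < g2 t /\ g2 t < g3 t + 1.
Proof.
  intros H1 H2 H3 t Ht. destruct (step_control_bounded vs) as [H HH].
  pose proof (is_sol_shift1 _ _ _ H3) as H3'.
  repeat split; [eapply (is_sol_lt _ H (- (1/3)) 0)|eapply (is_sol_lt _ H 0 (1/3))
                |eapply (is_sol_lt _ H (1/3) (- (1/3) + 1) _ (fun t => g3 t + 1))];
    eauto; apply HH || lra.
Qed.

(* One phase with a sine field centred at [-1/2] (equivalently at [1/2]) gathers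
   [[-1/3, 1/3]] near the stable point [0]. *)
Lemma gather_near_zero MF del : (forall y, Rabs (drift0 y) <= MF) -> 0 < del <= 1/16 ->
  exists v, forall h x g, sol h x g -> (forall s, 0 <= s < 1 -> h s = v) ->
    - (1/3) <= x <= 1/3 -> - del <= g 1 <= del.
Proof.
  intros HMF Hdel.
  destruct (control_exists ((MF + 1) / sin (2 * PI * del)) (- (1/2))) as [v Hv].
  exists v. intros h x g Hg Hh Hx.
  assert (Hh' : forall s, 0 <= s < 0 + 1 -> h s = v) by (intros s Hs; apply Hh; lra).
  pose proof (sine_amplitude MF del ltac:(lra)) as HA.
  pose proof (proj1 Hg) as Hg0. rewrite <- (Rplus_0_l 1).
  destruct (Rle_dec x 0).
  - pose proof (phase_above h x g 0 v _ (- (1/2)) del del MF HMF Hg (Rle_refl 0) Hh' Hv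
                  ltac:(lra) ltac:(lra) HA ltac:(lra)). lra.
  - assert (Hv' : forall y, control_field v y
                    = (MF + 1) / sin (2 * PI * del) * sin (2 * PI * (y - (- (1/2) + 1)))).
    { intros y. rewrite Hv, (sin_2PI_shift1 y (- (1/2) + 1)). do 3 f_equal. ring. }
    pose proof (phase_below h x g 0 v _ (- (1/2) + 1) del del MF HMF Hg (Rle_refl 0) Hh' Hv'
                  ltac:(lra) ltac:(lra) HA ltac:(lra)). lra.
Qed.

(* Two points close to [c0] are split by a sine field centred between them, which sends them
   near [c0 + 1/2] and [c0 - 1/2]; a second field, stable at the points [c0 + 1/3] and
   [c0 - 2/3] (congruent modulo 1), then captures both. *)
Lemma separate_pair MF del c0 p q t0 : (forall y, Rabs (drift0 y) <= MF) -> 0 < del <= 1/16 ->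
  exists va vb, forall h xu xw u w, 0 <= t0 ->
    (forall s, t0 <= s < t0 + 1 -> h s = va) -> (forall s, t0 + 1 <= s < t0 + 2 -> h s = vb) ->
    sol h xu u -> sol h xw w -> u t0 = p -> w t0 = q ->
    c0 - del <= p -> p < q -> q <= c0 + del ->
    c0 - 2/3 - del <= u (t0 + 2) <= c0 - 2/3 + del /\
    c0 + 1/3 - del <= w (t0 + 2) <= c0 + 1/3 + del.
Proof.
  intros HMF Hdel.
  set (gam := (q - p) / 2). set (m := (p + q) / 2).
  destruct (control_exists ((MF + 1) / sin (2 * PI * gam)) m) as [va Hva].
  destruct (control_exists ((MF + 1) / sin (2 * PI * del)) (c0 + 5/6)) as [vb Hvb].
  exists va, vb. intros h xu xw u w Ht0 Ha' Hb' Hu Hw Hup Hwq Hp Hpq Hq.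
  assert (Hgam : 0 < gam <= del) by (unfold gam; lra).
  pose proof (sine_amplitude MF gam ltac:(lra)) as HAa.
  pose proof (sine_amplitude MF del ltac:(lra)) as HAb.
  assert (Hb'' : forall s, t0 + 1 <= s < t0 + 1 + 1 -> h s = vb)
    by (intros s Hs; apply Hb'; lra).
  assert (Hvb' : forall y, control_field vb y
                   = (MF + 1) / sin (2 * PI * del) * sin (2 * PI * (y - (c0 + 5/6 - 1)))).
  { intros y. rewrite Hvb, (sin_2PI_shift1 y (c0 + 5/6)). reflexivity. }
  pose proof (phase_above h xw w t0 va _ m gam del MF HMF Hw Ht0 Ha' Hva
                ltac:(lra) ltac:(lra) HAa ltac:(unfold m, gam in *; lra)) as Hw1.
  pose proof (phase_below h xu u t0 va _ m gam del MF HMF Hu Ht0 Ha' Hva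
                ltac:(lra) ltac:(lra) HAa ltac:(unfold m, gam in *; lra)) as Hu1.
  assert (Hm : c0 - del <= m <= c0 + del) by (unfold m; lra).
  pose proof (phase_below h xw w (t0 + 1) vb _ (c0 + 5/6) del del MF HMF Hw ltac:(lra) Hb'' Hvb
                ltac:(lra) ltac:(lra) HAb ltac:(lra)) as Hw2.
  pose proof (phase_below h xu u (t0 + 1) vb _ (c0 + 5/6 - 1) del del MF HMF Hu ltac:(lra) Hb''
                Hvb' ltac:(lra) ltac:(lra) HAb ltac:(lra)) as Hu2.
  replace (t0 + 1 + 1) with (t0 + 2) in Hw2, Hu2 by ring. split; lra.
Qed.

(* The controls of the last two stages depend on where the first stages left the points; this
   is legitimate because solutions at time [t] only depend on the control on [[0, t)]. *)
Lemma three_point_controls del : 0 < del <= 1/16 -> exists vs, forall g1 g2 g3,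
  sol (step_control 0 vs) 0 g1 -> sol (step_control 0 vs) (1/3) g2 ->
  sol (step_control 0 vs) (- (1/3)) g3 ->
  (- del <= g3 1 /\ g3 1 < g2 1 /\ g2 1 <= del) /\
  (1/3 - del <= g1 3 /\ g1 3 < g3 3 + 1 /\ g3 3 + 1 <= 1/3 + del) /\
  (- (1/3) - del <= g2 5 - 1 /\ g2 5 - 1 < g1 5 /\ g1 5 <= - (1/3) + del).
Proof.
  intros Hdel. destruct drift0_bounded as [MF HMF].
  destruct (gather_near_zero MF del HMF Hdel) as [v1 Hv1].
  destruct (step_sol_exists [v1] 0) as [u1 Hu1].
  destruct (step_sol_exists [v1] (- (1/3))) as [u3 Hu3].
  destruct (separate_pair MF del 0 (u3 1) (u1 1) 1 HMF Hdel) as [va [vb Hab]].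
  destruct (step_sol_exists [v1; va; vb] 0) as [w1 Hw1].
  destruct (step_sol_exists [v1; va; vb] (1/3)) as [w2 Hw2].
  destruct (separate_pair MF del (1/3) (w1 3) (w2 3) 3 HMF Hdel) as [vc [vd Hcd]].
  set (vs := [v1; va; vb; vc; vd]).
  exists vs. intros g1 g2 g3 H1 H2 H3.
  assert (Hon : forall i s, INR i <= s < INR i + 1 ->
                 step_control 0 vs s = List.nth i vs (0, 0))
    by (intros i s Hs; apply step_control_nth; lra).
  assert (Hh0 : forall s, 0 <= s < 1 -> step_control 0 vs s = v1)
    by (intros s Hs; apply (Hon 0%nat); simpl; lra).
  pose proof (step_sols_ordered vs g1 g2 g3 H1 H2 H3) as Hord.
  pose proof (Hv1 _ 0 g1 H1 Hh0 ltac:(lra)). pose proof (Hv1 _ (1/3) g2 H2 Hh0 ltac:(lra)).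
  pose proof (Hv1 _ (- (1/3)) g3 H3 Hh0 ltac:(lra)).
  pose proof (Hord 1 ltac:(lra)). pose proof (Hord 3 ltac:(lra)). pose proof (Hord 5 ltac:(lra)).
  pose proof (step_sol_prefix [v1] [va; vb; vc; vd] _ _ _ 1 ltac:(simpl; lra) Hu3 H3) as E3.
  pose proof (step_sol_prefix [v1] [va; vb; vc; vd] _ _ _ 1 ltac:(simpl; lra) Hu1 H1) as E1.
  destruct (Hab _ _ _ g3 g1 ltac:(lra) (fun s Hs => Hon 1%nat s ltac:(simpl; lra))
              (fun s Hs => Hon 2%nat s ltac:(simpl; lra)) H3 H1 (eq_sym E3) (eq_sym E1)
              ltac:(lra) ltac:(lra) ltac:(lra)) as [Hg3 Hg1].
  replace (1 + 2) with 3 in Hg3, Hg1 by ring.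
  pose proof (step_sol_prefix [v1; va; vb] [vc; vd] _ _ _ 3 ltac:(simpl; lra) Hw1 H1) as E1'.
  pose proof (step_sol_prefix [v1; va; vb] [vc; vd] _ _ _ 3 ltac:(simpl; lra) Hw2 H2) as E2'.
  destruct (Hcd _ _ _ g1 g2 ltac:(lra) (fun s Hs => Hon 3%nat s ltac:(simpl; lra))
              (fun s Hs => Hon 4%nat s ltac:(simpl; lra)) H1 H2 (eq_sym E1') (eq_sym E2')
              ltac:(lra) ltac:(lra) ltac:(lra)) as [Hg1' Hg2'].
  replace (3 + 2) with 5 in Hg1', Hg2' by ring.
  lra.
Qed.

End Model.

Theorem lemma4p14
  (c sigma : R) (a : R -> R) (b : Z -> R -> R)
  (Hsigma : 0 < sigma)
  (Ha : smooth a) (Hap : periodic1 a)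
  (Hb : forall k : Z, smooth (b k)) (Hbp : forall k : Z, periodic1 (b k))
  (Hsum : forall x : R, summable_Z (fun k => Derive (b k) x * b k x))
  (Hcorr : smooth (corr b))
  (Hspan1 : forall l1 l2 : R, exists L eta : R,
      forall x : R, l1 * b 1%Z x + l2 * b (-1)%Z x = L * sin (2 * PI * x + eta))
  (Hspan2 : forall L eta : R, exists l1 l2 : R,
      forall x : R, l1 * b 1%Z x + l2 * b (-1)%Z x = L * sin (2 * PI * x + eta)) :
  let z1 := 0 in let z2 := 1 / 3 in let z3 := - (1 / 3) in
  forall eps : R, 0 < eps ->
  exists (T : R) (h : R -> R * R),
    0 < T /\ in_H h /\
    (exists g1 g2 g3 : R -> R,
        is_sol c sigma a b h z1 g1 /\ is_sol c sigma a b h z2 g2 /\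
        is_sol c sigma a b h z3 g3) /\
    (forall g1 g2 g3 : R -> R,
        is_sol c sigma a b h z1 g1 -> is_sol c sigma a b h z2 g2 ->
        is_sol c sigma a b h z3 g3 ->
        (z1 - eps <= g3 T /\ g3 T < g2 T /\ g2 T <= z1 + eps) /\
        (z2 - eps <= g1 (3 * T) /\ g1 (3 * T) < g3 (3 * T) + 1 /\
           g3 (3 * T) + 1 <= z2 + eps) /\
        (z3 - eps <= g2 (5 * T) - 1 /\ g2 (5 * T) - 1 < g1 (5 * T) /\
           g1 (5 * T) <= z3 + eps)).
Proof.
  intros z1 z2 z3 eps Heps. subst z1 z2 z3.
  set (del := Rmin eps (1/16)).
  assert (Hdel : 0 < del <= 1/16) by (unfold del, Rmin; destruct Rle_dec; lra).
  assert (Hdel_eps : del <= eps) by apply Rmin_l.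
  destruct (three_point_controls c sigma a b Hsigma Ha Hap Hb Hbp Hcorr Hspan2 del Hdel)
    as [vs Hvs].
  exists 1, (step_control 0 vs). split; [lra|]. split; [apply in_H_step_control|]. split.
  - destruct (step_sol_exists c sigma a b Hsigma Ha Hap Hb Hbp Hcorr vs 0) as [g1 H1].
    destruct (step_sol_exists c sigma a b Hsigma Ha Hap Hb Hbp Hcorr vs (1/3)) as [g2 H2].
    destruct (step_sol_exists c sigma a b Hsigma Ha Hap Hb Hbp Hcorr vs (- (1/3))) as [g3 H3].
    exists g1, g2, g3. auto.
  - intros g1 g2 g3 H1 H2 H3. rewrite !Rmult_1_r.
    pose proof (Hvs g1 g2 g3 H1 H2 H3). lra.
Qed.
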